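(* Suppose there is a constant $a>0$ such that $\mathbb P(\|\hat F^{(i)}_t-F^{(i)}\|\ge x)\le2\exp(-atx^2)$ for all $i\in\mathbb K$, $x>0$, $t\ge1$. Then for every admissible policy $\pi$, every $T\ge1$ and every $x\ge0$, $$\mathbb P\bigl(\|\hat F^\pi_T-\tilde F^\pi_T\|>x\bigr)\le2KT\exp\Bigl(-a\frac{Tx^2}{K^2}\Bigr).$$
   Context: Bandit setting: $K\ge1$, $\mathbb K=\{1,\dots,K\}$; arm $i$ produces i.i.d. rewards $X^{(i)}_1,X^{(i)}_2,\dots$ with distribution function $F^{(i)}$, all rewards mutually independent. An admissible policy $\pi=(\pi_1,\pi_2,\dots)$ chooses $\pi_t\in\mathbb K$ as a measurable function of an independent randomization variable and of past actions/rewards; $\tau_i(t)=\sum_{s\le t}\mathbf 1\{\pi_s=i\}$, the reward at time $t$ is $X^\pi_t=X^{(i)}_{\tau_i(t)}$ on $\{\pi_t=i\}$. $\hat F^\pi_T(y)=\frac1T\sum_{t\le T}\mathbf 1\{X^\pi_t\le y\}$, $\hat F^{(i)}_t(y)=\frac1t\sum_{s\le t}\mathbf 1\{X^{(i)}_s\le y\}$, and $\tilde F^\pi_T=\frac1T\sum_{i=1}^K\tau_i(T)F^{(i)}$. $\|\cdot\|$ is a norm on a vector space of bounded functions $\mathbb R\to\mathbb R$ containing all these functions. *)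

From HB Require Import structures.
From mathcomp Require Import all_boot all_order all_algebra.
From mathcomp Require Import all_classical all_reals all_analysis.
Set Implicit Arguments. Unset Strict Implicit. Unset Printing Implicit Defensive.
Import Order.TTheory GRing.Theory Num.Theory.
Local Open Scope classical_set_scope.
Local Open Scope ring_scope.

Section Bandit.
Context {d : measure_display} {Omega : measurableType d} {R : realType}.

(* Outer probability: P*(A) = inf { P B | B measurable, A ⊆ B }.
   Equals P A whenever A is measurable. *)
Definition Pstar (P : probability Omega R) (A : set Omega) : \bar R :=
  ereal_inf [set P B | B in [set B | measurable B /\ A `<=` B]].

Definition mutual_indep {I : eqType} (P : probability Omega R) (D : set I)
    (Y : I -> Omega -> R) : Prop :=
  forall (J : seq I) (B : I -> set R),
    uniq J -> (forall j, j \in J -> D j) -> (forall j, measurable (B j)) ->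
    P (\bigcap_(j in [set` J]) (Y j @^-1` B j)) =
    (\prod_(j <- J) P (Y j @^-1` B j))%E.

Definition step (c : R) : R -> R := fun y => if c <= y then 1 else 0.

Definition tau {K : nat} (pi : nat -> Omega -> 'I_K) (i : 'I_K) (t : nat)
    (w : Omega) : nat :=
  \sum_(1 <= s < t.+1) (pi s w == i).

(* reward collected at time t: X^{(pi_t)}_{tau_{pi_t}(t)}; rewards of arm i are
   X i 1, X i 2, ... (X i 0 is unused) *)
Definition Xpi {K : nat} (X : 'I_K -> nat -> Omega -> R)
    (pi : nat -> Omega -> 'I_K) (t : nat) (w : Omega) : R :=
  X (pi t w) (tau pi (pi t w) t w) w.

Definition Fhat_arm {K : nat} (X : 'I_K -> nat -> Omega -> R) (i : 'I_K)
    (t : nat) (w : Omega) : R -> R :=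
  fun y => t%:R^-1 * \sum_(1 <= s < t.+1) (if X i s w <= y then 1 else 0).

Definition Fhat_pi {K : nat} (X : 'I_K -> nat -> Omega -> R)
    (pi : nat -> Omega -> 'I_K) (T : nat) (w : Omega) : R -> R :=
  fun y => T%:R^-1 * \sum_(1 <= t < T.+1) (if Xpi X pi t w <= y then 1 else 0).

Definition Ftilde_pi {K : nat} (F : 'I_K -> R -> R)
    (pi : nat -> Omega -> 'I_K) (T : nat) (w : Omega) : R -> R :=
  fun y => T%:R^-1 * \sum_(i < K) (tau pi i T w)%:R * F i y.

Definition past_gen {K : nat} (U : Omega -> R) (X : 'I_K -> nat -> Omega -> R)
    (pi : nat -> Omega -> 'I_K) (t : nat) : set (set Omega) :=
  [set A | (exists B : set R, measurable B /\ A = U @^-1` B)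
        \/ (exists s k, (1 <= s < t)%N /\ A = [set w | pi s w = k])
        \/ (exists s (B : set R), (1 <= s < t)%N /\ measurable B /\
                                  A = Xpi X pi s @^-1` B)].

(* admissible policy with randomization variable U: pi_t is measurable w.r.t.
   sigma(U, past actions, past rewards), for every t >= 1 (equivalently, by
   Doob-Dynkin, a measurable function of U and the past) *)
Definition admissible {K : nat} (U : Omega -> R) (X : 'I_K -> nat -> Omega -> R)
    (pi : nat -> Omega -> 'I_K) : Prop :=
  forall t k, (1 <= t)%N -> <<s past_gen U X pi t >> [set w | pi t w = k].

End Bandit.

Definition is_norm_on {R : realType} (S : set (R -> R)) (nrm : (R -> R) -> R)
  : Prop :=
  [/\ S (fun _ => 0),
      (forall f g, S f -> S g -> S (f \+ g)),
      (forall (c : R) f, S f -> S (fun y => c * f y)),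
      (forall f, S f -> exists M : R, forall y, `|f y| <= M)
    & [/\ (forall f, S f -> 0 <= nrm f),
          (forall f, S f -> nrm f = 0 -> f = (fun _ => 0)),
          (forall (c : R) f, S f -> nrm (fun y => c * f y) = `|c| * nrm f)
        & (forall f g, S f -> S g -> nrm (f \+ g) <= nrm f + nrm g)]].

From HB Require Import structures.
From mathcomp Require Import all_boot all_order all_algebra.
From mathcomp Require Import all_classical all_reals all_analysis.
From mathcomp Require Import ring lra.
Import Order.TTheory GRing.Theory Num.Theory.
Local Open Scope classical_set_scope.
Local Open Scope ring_scope.

(* Grouping the T pulls by arm gives
   T (Fhat^pi_T - Ftilde^pi_T) = sum_i tau_i(T) (Fhat^(i)_{tau_i(T)} - F^(i)),
   so by the triangle inequality a deviation larger than x forces some arm i,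
   pulled t = tau_i(T) >= 1 times, with ||Fhat^(i)_t - F^(i)|| >= T x / (K t).
   A union bound over the K T pairs (i, t), each controlled by the
   concentration hypothesis at level T x / (K t), whose exponent
   a t (T x / (K t))^2 is at least a T x^2 / K^2 because t <= T, gives the
   claim.  The argument is pathwise. *)

Section OuterProbability.
Context {d : measure_display} {Omega : measurableType d} {R : realType}.
Variable P : probability Omega R.

Lemma Pstar_le_measure (A B : set Omega) : measurable B -> A `<=` B ->
  (Pstar P A <= P B)%E.
Proof. by move=> mB AB; apply: ereal_inf_lbound; exists B. Qed.

Lemma Pstar_le1 (A : set Omega) : (Pstar P A <= 1)%E.
Proof.
by rewrite -(probability_setT P); apply: Pstar_le_measure => //; apply: subsetT.
Qed.

Lemma Pstar_subU2_le (A A1 A2 : set Omega) (a1 a2 : R) : A `<=` A1 `|` A2 ->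
  (Pstar P A1 <= a1%:E)%E -> (Pstar P A2 <= a2%:E)%E ->
  (Pstar P A <= (a1 + a2)%:E)%E.
Proof.
move=> sA h1 h2; apply/lee_addgt0Pr => e e0.
have e2 : 0 < e / 2 by rewrite divr_gt0.
have cover (Ak : set Omega) ak : (Pstar P Ak <= ak%:E)%E ->
    exists2 B, measurable B /\ Ak `<=` B & (P B < (ak + e / 2)%:E)%E.
  move=> hk.
  have /ereal_inf_lt[_ [B BAk <-] PB] : (Pstar P Ak < (ak + e / 2)%:E)%E.
    by apply: le_lt_trans hk _; rewrite lte_fin ltrDl.
  by exists B.
have [B1 [mB1 sB1] PB1] := cover _ _ h1.
have [B2 [mB2 sB2] PB2] := cover _ _ h2.
apply: le_trans (Pstar_le_measure A (B1 `|` B2) _ _) _.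
- exact: measurableU.
- by move=> w /sA [/sB1|/sB2]; [left|right].
apply: le_trans (measureU2 _ mB1 mB2) _.
apply: le_trans (leeD (ltW PB1) (ltW PB2)) _.
by rewrite -EFinD lee_fin; lra.
Qed.

Lemma Pstar_sub_bigcup_le (I : eqType) (s : seq I) (Ak : I -> set Omega)
    (b : R) (A : set Omega) :
  A `<=` \bigcup_(k in [set` s]) Ak k ->
  (forall k, k \in s -> (Pstar P (Ak k) <= b%:E)%E) ->
  (Pstar P A <= ((size s)%:R * b)%:E)%E.
Proof.
elim: s A => [|k s IH] A sA hb /=.
  rewrite mul0r; apply: le_trans (Pstar_le_measure A set0 measurable0 _) _.
    by move=> w /sA [k]; rewrite /= in_nil.
  by rewrite measure0.
rewrite -addn1 natrD mulrDl mul1r addrC.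
apply: (Pstar_subU2_le A (Ak k) (\bigcup_(k in [set` s]) Ak k) _ _ _
  (hb k (mem_head k s))).
  move=> w /sA [k']; rewrite /= in_cons => /predU1P [-> | ks] h; first by left.
  by right; exists k'.
by apply: IH => // k' ks; apply: hb; rewrite in_cons ks orbT.
Qed.

End OuterProbability.

Section NormOn.
Context {R : realType} {S : set (R -> R)} {nrm : (R -> R) -> R}.
Hypothesis normS : is_norm_on S nrm.

Lemma nrm0 : nrm (fun _ => 0) = 0.
Proof.
have [S0 _ _ _ [_ _ nrmZ _]] := normS.
rewrite -[in LHS](funext (fun y => mul0r (0 : R))) nrmZ //.
by rewrite normr0 mul0r.
Qed.

Lemma is_norm_on_sum {I : eqType} (s : seq I) (f : I -> R -> R) :
  (forall i, i \in s -> S (f i)) ->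
  S (fun y => \sum_(i <- s) f i y) /\
  nrm (fun y => \sum_(i <- s) f i y) <= \sum_(i <- s) nrm (f i).
Proof.
have [S0 SD _ _ [_ _ _ nrmD]] := normS.
elim: s => [|k s IH] Sf.
  have -> : (fun y => \sum_(i <- [::]) f i y) = (fun _ => 0).
    by apply/funext => y; rewrite big_nil.
  by rewrite big_nil nrm0.
have [Ss nrms] := IH (fun i si => Sf i (mem_behead (s := k :: s) si)).
have Sk : S (f k) by apply: Sf; rewrite mem_head.
have -> : (fun y => \sum_(i <- k :: s) f i y) =
    f k \+ (fun y => \sum_(i <- s) f i y).
  by apply/funext => y; rewrite big_cons.
split; first exact: SD.
by apply: le_trans (nrmD _ _ Sk Ss) _; rewrite big_cons lerD2l.
Qed.

End NormOn.

Section Pulls.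
Context {d : measure_display} {Omega : measurableType d} {R : realType}.
(* [{pi] is a token of generic_quotient, hence the space in [{ pi : _ }]. *)
Context {K : nat} {X : 'I_K -> nat -> Omega -> R} { pi : nat -> Omega -> 'I_K }.

Lemma tau0 i w : tau pi i 0 w = 0%N.
Proof. by rewrite /tau big_geq. Qed.

Lemma tauS i T w : tau pi i T.+1 w = (tau pi i T w + (pi T.+1 w == i))%N.
Proof. by rewrite /tau big_nat_recr. Qed.

Lemma tau_le i T w : (tau pi i T w <= T)%N.
Proof.
apply: (@leq_trans (\sum_(1 <= s < T.+1) 1)).
  by apply: leq_sum => s _; exact: leq_b1.
by rewrite sum_nat_const_nat subn1 muln1.
Qed.

Lemma sum_Xpi_by_arm {V : nmodType} (g : R -> V) T w :
  \sum_(1 <= t < T.+1) g (Xpi X pi t w) =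
  \sum_(i < K) \sum_(1 <= s < (tau pi i T w).+1) g (X i s w).
Proof.
elim: T => [|T IH].
  by rewrite big_geq // big1 // => i _; rewrite tau0 big_geq.
set j := pi T.+1 w.
rewrite big_nat_recr //= IH (bigD1 j) //= [RHS](bigD1 j) //=.
rewrite /Xpi -/j tauS eqxx addn1 (big_nat_recr (tau pi j T w).+1) //= addrAC.
congr (_ + _); apply: eq_bigr => i /negPf ne.
by rewrite tauS eq_sym ne addn0.
Qed.

End Pulls.

Lemma exists_gt_of_sum_gt (R : realDomainType) (K : nat) (u : 'I_K -> R) m :
  K%:R * m < \sum_(i < K) u i -> exists i, m < u i.
Proof.
move=> hsum; apply: contrapT => /forallNP hle.
have : \sum_(i < K) u i <= \sum_(i < K) m.
  by apply: ler_sum => i _; rewrite leNgt; apply/negP; exact: hle.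
by rewrite sumr_const card_ord -mulr_natl leNgt hsum.
Qed.

Section Deviation.
Context {d : measure_display} {Omega : measurableType d} {R : realType}.
Context {K : nat} {X : 'I_K -> nat -> Omega -> R} {F : 'I_K -> R -> R}.
Context { pi : nat -> Omega -> 'I_K }.

Lemma mulr_Fhat_arm i t w y :
  t%:R * Fhat_arm X i t w y = \sum_(1 <= s < t.+1) step (X i s w) y.
Proof.
rewrite /Fhat_arm; have [->|t_gt0] := posnP t; first by rewrite mul0r big_geq.
by rewrite mulrA mulfV ?mul1r // pnatr_eq0 -lt0n.
Qed.

Lemma Fhat_pi_sub_Ftilde T w :
  Fhat_pi X pi T w \- Ftilde_pi F pi T w =
  (fun y => T%:R^-1 * \sum_(i < K)
     (tau pi i T w)%:R * (Fhat_arm X i (tau pi i T w) w \- F i) y).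
Proof.
apply/funext => y; rewrite /Fhat_pi /Ftilde_pi.
have /= -> := sum_Xpi_by_arm (X := X) (pi := pi) (step^~ y) T w.
rewrite -mulrBr -sumrB; congr (_ * _); apply: eq_bigr => i _.
by rewrite mulrBr mulr_Fhat_arm.
Qed.

Section NormBound.
Context {S : set (R -> R)} {nrm : (R -> R) -> R}.
Hypotheses (normS : is_norm_on S nrm) (S_F : forall i, S (F i)).
Hypothesis S_step : forall i s w, (1 <= s)%N -> S (step (X i s w)).

Lemma S_Fhat_arm_sub_F i t w : S (Fhat_arm X i t w \- F i).
Proof.
have [_ SD SZ _ _] := normS.
have -> : Fhat_arm X i t w \- F i =
    (fun y => t%:R^-1 * \sum_(s <- index_iota 1 t.+1) step (X i s w) y)
      \+ (fun y => -1 * F i y).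
  by apply/funext => y /=; rewrite mulN1r.
apply: SD; last exact: SZ.
apply: SZ.
apply: (is_norm_on_sum normS (index_iota 1 t.+1) (fun s => step (X i s w)) _).1.
by move=> s; rewrite mem_index_iota => /andP [s_ge1 _]; apply: S_step.
Qed.

Lemma nrm_Fhat_pi_sub_Ftilde_le T w :
  nrm (Fhat_pi X pi T w \- Ftilde_pi F pi T w) <=
  T%:R^-1 * \sum_(i < K)
    (tau pi i T w)%:R * nrm (Fhat_arm X i (tau pi i T w) w \- F i).
Proof.
have [_ _ SZ _ [_ _ nrmZ _]] := normS.
have [S_sum nrm_sum] := is_norm_on_sum normS (index_enum 'I_K)
  (fun i y => (tau pi i T w)%:R * (Fhat_arm X i (tau pi i T w) w \- F i) y)
  (fun i _ => SZ _ _ (S_Fhat_arm_sub_F _ _ _)).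
rewrite Fhat_pi_sub_Ftilde nrmZ // ger0_norm ?invr_ge0 //.
rewrite ler_wpM2l ?invr_ge0 //.
apply: le_trans nrm_sum _; apply: ler_sum => i _.
by rewrite nrmZ ?normr_nat //; exact: S_Fhat_arm_sub_F.
Qed.

Lemma deviation_sub_bigcup T x : (0 < K)%N -> (0 < T)%N -> 0 <= x ->
  [set w | x < nrm (Fhat_pi X pi T w \- Ftilde_pi F pi T w)] `<=`
  \bigcup_(k in [set` [seq (i, t) | i <- enum 'I_K, t <- iota 1 T]])
    [set w | T%:R * x / (K%:R * k.2%:R) <= nrm (Fhat_arm X k.1 k.2 w \- F k.1)].
Proof.
move=> K_gt0 T_gt0 x_ge0 w /= dev.
set g := fun i => nrm (Fhat_arm X i (tau pi i T w) w \- F i).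
have [i lt_i] : exists i, T%:R * x / K%:R < (tau pi i T w)%:R * g i.
  apply: exists_gt_of_sum_gt; rewrite mulrCA divff ?pnatr_eq0 -?lt0n // mulr1.
  rewrite -ltr_pdivlMl ?ltr0n //; apply: lt_le_trans dev _.
  exact: nrm_Fhat_pi_sub_Ftilde_le.
have tau_gt0 : (0 < tau pi i T w)%N.
  rewrite lt0n; apply: contraTneq lt_i => ->.
  by rewrite mul0r -leNgt divr_ge0 ?mulr_ge0.
exists (i, tau pi i T w).
  apply/allpairsP; exists (i, tau pi i T w); split; rewrite ?mem_enum //.
  by rewrite mem_iota tau_gt0 add1n ltnS tau_le.
rewrite /= invfM mulrA ler_pdivrMr ?ltr0n //.
by rewrite [_ * _%:R]mulrC ltW.
Qed.

End NormBound.

End Deviation.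

Lemma expR_rescaled_deviation_le (R : realType) (a x : R) (K t T : nat) :
  0 <= a -> (0 < K)%N -> (0 < t <= T)%N ->
  expR (- (a * t%:R * (T%:R * x / (K%:R * t%:R)) ^+ 2)) <=
  expR (- (a * (T%:R * x ^+ 2 / K%:R ^+ 2))).
Proof.
move=> a_ge0 K_gt0 /andP [t_gt0 t_le_T].
have tR_gt0 : 0 < t%:R :> R by rewrite ltr0n.
have -> : a * t%:R * (T%:R * x / (K%:R * t%:R)) ^+ 2 =
    a * (T%:R * x ^+ 2 / K%:R ^+ 2) * (T%:R / t%:R).
  by field; rewrite !pnatr_eq0 -!lt0n t_gt0.
rewrite ler_expR lerN2; apply: ler_peMr.
- by rewrite mulr_ge0 // divr_ge0 ?sqr_ge0 // mulr_ge0 ?sqr_ge0.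
- by rewrite ler_pdivlMr // mul1r ler_nat.
Qed.

Theorem lemma18 (d : measure_display) (Omega : measurableType d) (R : realType)
  (P : probability Omega R) (K : nat) (X : 'I_K -> nat -> Omega -> R)
  (F : 'I_K -> R -> R) (S : set (R -> R)) (nrm : (R -> R) -> R) (a : R) :
  (0 < K)%N ->
  (* rewards are real random variables *)
  (forall i s, (1 <= s)%N -> measurable_fun setT (X i s)) ->
  (* X^{(i)}_s has distribution function F^{(i)} *)
  (forall i s y, (1 <= s)%N -> (F i y)%:E = P [set w | X i s w <= y]) ->
  (* all rewards are mutually independent *)
  mutual_indep P [set j | (1 <= j.2)%N] (fun j : 'I_K * nat => X j.1 j.2) ->
  (* ||.|| is a norm on a vector space S of bounded functions containing all
     F^{(i)} and all empirical distribution functions *)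
  is_norm_on S nrm ->
  (forall i, S (F i)) ->
  (forall i s w, (1 <= s)%N -> S (step (X i s w))) ->
  (* concentration hypothesis *)
  0 < a ->
  (forall i (x : R) t, 0 < x -> (1 <= t)%N ->
     (Pstar P [set w | (x <= nrm (Fhat_arm X i t w \- F i))%R]
       <= (2 * expR (- (a * t%:R * x ^+ 2)))%:E)%E) ->
  forall (U : Omega -> R) (pi : nat -> Omega -> 'I_K),
    (* independent randomization variable *)
    measurable_fun setT U ->
    mutual_indep P [set j | if j is Some j' then (1 <= j'.2)%N else True]
      (fun j : option ('I_K * nat) =>
         if j is Some j' then X j'.1 j'.2 else U) ->
    admissible U X pi ->
    forall (T : nat) (x : R), (1 <= T)%N -> 0 <= x ->
      (Pstar P [set w | (x < nrm (Fhat_pi X pi T w \- Ftilde_pi F pi T w))%R]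
        <= (2 * K%:R * T%:R *
            expR (- (a * (T%:R * x ^+ 2 / K%:R ^+ 2))))%:E)%E.
Proof.
move=> K_gt0 _ _ _ normS S_F S_step a_gt0 concentration U pi _ _ _ T x T_gt0.
rewrite le_eqVlt => /predU1P [<- | x_gt0].
  apply: le_trans (Pstar_le1 _ _) _.
  rewrite expr0n /= mulr0 mul0r mulr0 oppr0 expR0 mulr1 lee_fin.
  have K_ge1 : 1 <= K%:R :> R by rewrite ler1n.
  have T_ge1 : 1 <= T%:R :> R by rewrite ler1n.
  nra.
pose s := [seq (i, t) | i <- enum 'I_K, t <- iota 1 T].
have -> : 2 * K%:R * T%:R * expR (- (a * (T%:R * x ^+ 2 / K%:R ^+ 2))) =
    (size s)%:R * (2 * expR (- (a * (T%:R * x ^+ 2 / K%:R ^+ 2)))).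
  by rewrite size_allpairs size_enum_ord size_iota natrM; ring.
apply: Pstar_sub_bigcup_le.
  exact: (deviation_sub_bigcup normS S_F S_step T x K_gt0 T_gt0 (ltW x_gt0)).
move=> _ /allpairsP [[i t] [_ /[!mem_iota] /andP [t_gt0 t_le_T] ->]] /=.
apply: le_trans (concentration i _ t _ t_gt0) _.
  by apply: divr_gt0; apply: mulr_gt0; rewrite ?ltr0n.
rewrite lee_fin ler_pM2l // expR_rescaled_deviation_le ?(ltW a_gt0) //.
by rewrite t_gt0 -ltnS -add1n.
Qed.
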